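(* Consider the network and Algorithm 1 described in the context, with parameter $\Delta_{est}\ge\Delta$, and assume $\delta\le\frac17$. Let $0<\epsilon<1$, let $v\to u$ be a link, and let $\sigma$ be a sequence of $\frac{8\max(2S,3\Delta_{est})}{\rho}\ln\!\left(\frac{N^2}{\epsilon}\right)$ frame-pairs that is admissible with respect to $v\to u$. Then the probability that $\sigma$ does not cover $v\to u$ is at most $\frac{\epsilon}{N^2}$.
   Context: Network: a finite set of $N$ nodes; each node $u$ has a nonempty available channel set $A_u$; $S=\max_u |A_u|$. Neighborhood on a channel is symmetric; all channels have identical propagation characteristics, so $u,v$ are neighbors on $c$ iff they are neighbors on some channel and $c\in A_u\cap A_v$. $\deg(u,c)$ is the number of neighbors of $u$ on $c$, $\Delta=\max_u\max_{c\in A_u}\deg(u,c)$. For neighbors $v,u$ the link $v\to u$ has span $\mathrm{span}(v\to u)=A_u\cap A_v$ and span-ratio $|\mathrm{span}(v\to u)|/|A_u|$; $\rho$ is the minimum span-ratio over all links. A node operates on one channel at a time, cannot transmit and receive simultaneously; a node listening on $c$ throughout a real-time interval $I$ receives a message transmitted on $c$ during $I$ by a neighbor $v$ provided no other neighbor on $c$ transmits on $c$ during $I$; no collision detection. Clocks: each node $u$ has a clock $C_u$ with $(1-\delta)\Delta t\le C_u(t+\Delta t)-C_u(t)\le(1+\delta)\Delta t$ for all real $t$, $\Delta t\ge0$; arbitrary offsets. Algorithm 1 (input: positive integer $\Delta_{est}$, upper bound on $\Delta$ known to all nodes): each node starts at an arbitrary real time and partitions local time into consecutive frames of local length $L$,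 each split into three slots of local length $L/3$. At the start of each frame, node $u$ picks $c$ uniformly at random from $A_u$, and with probability $p_u=\min(\frac12,\frac{|A_u|}{3\Delta_{est}})$ transmits on $c$ during each of the three slots a message with its identity and $A_u$; otherwise it listens on $c$ during the entire frame, recording each sender $v$ (with set $A$) as a neighbor with common channels $A\cap A_u$. Random choices are independent across frames and nodes. Definitions: for a frame $f$, $\mathrm{node}(f)$ is the node owning it. A pair $(f,g)$ is aligned if some slot of $f$ lies completely within $g$ in real time. $\mathrm{overlap}(g,w)$ is the set of frames of $w$ overlapping $g$ in real time, and $\mathrm{overlapAll}(g)$ is the set of all frames (of all nodes) overlapping $g$. $(f,g)$ with $\mathrm{node}(f)=v$, $\mathrm{node}(g)=u$ covers $v\to u$ on $c$ if $v$ transmits on $c$ during $f$, $u$ listens on $c$ during $g$, and no neighbor $w\ne v$ of $u$ on $c$ transmits on $c$ during any frame in $\mathrm{overlap}(g,w)$; it covers $v\to u$ if it does so on some $c\in\mathrm{span}(v\to u)$. $(f,g)$ precedes $(p,q)$ if $\mathrm{node}(f)=\mathrm{node}(p)$, $\mathrm{node}(g)=\mathrm{node}(q)$, $f$ starts before $p$ and $g$ starts before $q$. A sequence $(f_1,g_1),\dots,(f_M,g_M)$ of frame-pairs is admissible with respect to $v\to u$ if $\mathrm{node}(f_k)=v$ and $\mathrm{node}(g_k)=u$ for all $k$, $(f_k,g_k)$ precedes $(f_{k+1},g_{k+1})$ for $k<M$, each $(f_k,g_k)$ is aligned, and $\mathrm{overlapAll}(g_k)\cap\mathrm{overlapAll}(g_{k+1})=\emptyset$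 for $k<M$. A sequence covers $v\to u$ if some frame-pair in it covers $v\to u$. *)

From HB Require Import structures.
From mathcomp Require Import all_boot all_order all_algebra.
From mathcomp Require Import boolp classical_sets reals exp.
Set Implicit Arguments. Unset Strict Implicit. Unset Printing Implicit Defensive.
Import Order.TTheory GRing.Theory Num.Theory.
Local Open Scope ring_scope.
Local Open Scope classical_set_scope.

Section Network.
Variables (R : realType) (V Ch : finType).
(* [adj]: the (channel-independent) neighbourhood relation given by propagation;
   [A u]: available channel set of node u. *)
Variables (adj : rel V) (A : V -> {set Ch}).

Definition nbr_on (u w : V) (c : Ch) : bool :=
  [&& adj u w, c \in A u & c \in A w].

Definition is_link (v u : V) : bool := [exists c, nbr_on u v c].

Definition span (v u : V) : {set Ch} := A u :&: A v.

Definition deg (u : V) (c : Ch) : nat := #|[set w | nbr_on u w c]|.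

Definition Delta : nat := \max_(u : V) \max_(c in A u) deg u c.

Definition Smax : nat := \max_(u : V) #|A u|.

Definition span_ratio (v u : V) : R := #|span v u|%:R / #|A u|%:R.

(* minimum span-ratio over all links (all span-ratios are <= 1, so the
   neutral element 1 is harmless when a link exists) *)
Definition rho : R :=
  \big[Num.min/1]_(p : V * V | is_link p.1 p.2) span_ratio p.1 p.2.

Definition ptx (Dest : nat) (u : V) : R :=
  Num.min (1 / 2) (#|A u|%:R / (3 * Dest%:R)).

Definition drift_bounded (delta : R) (C : V -> R -> R) : Prop :=
  forall (u : V) (t dt : R), 0 <= dt ->
    (1 - delta) * dt <= C u (t + dt) - C u t <= (1 + delta) * dt.

Variables (C : V -> R -> R) (s : V -> R) (L : R).
(* node w starts at real time [s w]; its k-th frame (k : nat) is the set of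
   real times at which its local time elapsed since the start lies in
   [kL, (k+1)L); slot j (j < 3) of that frame is [kL + jL/3, kL + (j+1)L/3). *)
Definition frameSet (w : V) (k : nat) : set R :=
  [set t | s w <= t /\
     k%:R * L <= C w t - C w (s w) < k.+1%:R * L].

Definition slotSet (w : V) (k j : nat) : set R :=
  [set t | s w <= t /\
     k%:R * L + j%:R * (L / 3) <= C w t - C w (s w)
       < k%:R * L + j.+1%:R * (L / 3)].

Definition overlap (w : V) (k : nat) (u : V) (g : nat) : Prop :=
  frameSet w k `&` frameSet u g !=set0.

Definition aligned (v : V) (f : nat) (u : V) (g : nat) : Prop :=
  exists j : nat, (j < 3)%N /\ slotSet v f j `<=` frameSet u g.

(* admissible sequence (f k, g k)_{k < M} of frame-pairs, f k frames of v,
   g k frames of u (frames of a node are indexed in temporal order). *)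
Definition admissible (v u : V) (M : nat) (f g : nat -> nat) : Prop :=
  [/\ forall k, (k.+1 < M)%N -> (f k < f k.+1)%N /\ (g k < g k.+1)%N,
      forall k, (k < M)%N -> aligned v (f k) u (g k) &
      forall k, (k.+1 < M)%N -> forall (w : V) (j : nat),
        ~ (overlap w j u (g k) /\ overlap w j u (g k.+1))].

(* Random choices of Algorithm 1 for the frames with index < K of all nodes:
   an outcome assigns to every (node, frame) a channel and a bit
   (true = transmit during the frame, false = listen). *)
Variable K : nat.
Definition outcome := {ffun V * 'I_K -> Ch * bool}.

Definition choice_at (om : outcome) (w : V) (k : nat) : option (Ch * bool) :=
  match (insub k : option 'I_K) with
  | Some i => Some (om (w, i))
  | None => None
  end.

Definition transmits (om : outcome) (w : V) (k : nat) (c : Ch) : Prop :=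
  choice_at om w k = Some (c, true).
Definition listens (om : outcome) (w : V) (k : nat) (c : Ch) : Prop :=
  choice_at om w k = Some (c, false).

Definition pchoice (Dest : nat) (w : V) (x : Ch * bool) : R :=
  if x.1 \in A w then
    (#|A w|%:R)^-1 * (if x.2 then ptx Dest w else 1 - ptx Dest w)
  else 0.

Definition weight (Dest : nat) (om : outcome) : R :=
  \prod_(x : V * 'I_K) pchoice Dest x.1 (om x).

Definition Prob (Dest : nat) (E : outcome -> Prop) : R :=
  \sum_(om : outcome | `[< E om >]) weight Dest om.

Definition covers_on (om : outcome) (v : V) (f : nat) (u : V) (g : nat)
    (c : Ch) : Prop :=
  [/\ transmits om v f c, listens om u g c &
      forall (w : V) (j : nat), w != v -> nbr_on u w c ->
        overlap w j u g -> ~ transmits om w j c].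

Definition covers (om : outcome) (v : V) (f : nat) (u : V) (g : nat) : Prop :=
  exists c, c \in span v u /\ covers_on om v f u g c.

Definition seq_covers (om : outcome) (v u : V) (M : nat) (f g : nat -> nat)
    : Prop :=
  exists k, (k < M)%N /\ covers om v (f k) u (g k).

(* the finite window K contains all frames on which coverage of the
   sequence depends *)
Definition window_ok (u : V) (M : nat) (f g : nat -> nat) : Prop :=
  forall k, (k < M)%N ->
    [/\ (f k < K)%N, (g k < K)%N &
        forall (w : V) (j : nat), overlap w j u (g k) -> (j < K)%N].

End Network.

(* A frame-pair (f,g) covers v -> u as soon as v and u pick the same channel c
   of the span, v transmits, u listens, and no other neighbour of u on c
   transmits on c in a frame overlapping g. With drift at most 1/7 a frame of
   u overlaps at most three consecutive frames of any other node, so at most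
   3 (Dest - 1) frames can interfere, and each of them avoids transmitting on
   c with probability at least 1 - 1/(3 Dest); hence a single aligned pair
   covers v -> u with probability at least q = rho / (8 max(2S, 3 Dest)).
   Admissibility makes the sets of frames relevant to distinct pairs of the
   sequence disjoint (a frame overlapping two frames of u overlaps every frame
   of u in between), so the M events are independent under the product
   distribution and the sequence fails with probability at most
   (1 - q)^M <= exp(-qM) <= eps / N^2. *)
From Pilot Require Import Defs.
From HB Require Import structures.
From mathcomp Require Import all_boot all_order all_algebra.
From mathcomp Require Import boolp reals sequences exp.
From mathcomp Require Import ring lra.
Set Implicit Arguments. Unset Strict Implicit. Unset Printing Implicit Defensive.
Import Order.TTheory GRing.Theory Num.Theory.
Local Open Scope ring_scope.

Section ProductMeasure.
Variables (R : realType) (I J : finType) (p : I -> J -> R).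
Hypothesis p_ge0 : forall x j, 0 <= p x j.
Hypothesis p_sum1 : forall x, \sum_j p x j = 1.

Definition pweight (om : {ffun I -> J}) : R := \prod_x p x (om x).

Lemma pweight_ge0 om : 0 <= pweight om.
Proof. exact: prodr_ge0. Qed.

Lemma sum_pweight : \sum_om pweight om = 1.
Proof.
rewrite /pweight -(bigA_distr_bigA (fun x j => p x j)).
by rewrite big1 // => x _; rewrite p_sum1.
Qed.

Lemma sum_pweight_prod_mem (B : I -> {set J}) :
  \sum_om pweight om * \prod_x (om x \in B x)%:R = \prod_x \sum_(j in B x) p x j.
Proof.
transitivity (\sum_(om : {ffun I -> J}) \prod_x (p x (om x) * (om x \in B x)%:R)).
  by apply: eq_bigr => om _; rewrite /pweight -big_split.
rewrite -(bigA_distr_bigA (fun x j => p x j * (j \in B x)%:R)).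
apply: eq_bigr => x _; rewrite [RHS]big_mkcond /=; apply: eq_bigr => j _.
by case: (j \in B x); rewrite ?mulr1 ?mulr0.
Qed.

Lemma sum_setC1 x y : \sum_(j in ~: [set y]) p x j = 1 - p x y.
Proof.
rewrite -(p_sum1 x) [in RHS](bigD1 y) //= addrAC subrr add0r.
by apply: eq_bigl => j; rewrite in_setC in_set1.
Qed.

Definition depends_on (S : {set I}) (phi : {ffun I -> J} -> R) :=
  forall a b : {ffun I -> J}, (forall x, x \in S -> a x = b x) -> phi a = phi b.

Definition splice (S : {set I}) (a b : {ffun I -> J}) : {ffun I -> J} :=
  [ffun x => if x \in S then a x else b x].

Lemma splice_spliceK S a b : splice S (splice S a b) (splice S b a) = a.
Proof. by apply/ffunP => x; rewrite !ffunE; case: (x \in S). Qed.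

Lemma pweight_splice S a b :
  pweight a * pweight b = pweight (splice S a b) * pweight (splice S b a).
Proof.
rewrite /pweight -!big_split; apply: eq_bigr => x _; rewrite !ffunE.
by case: (x \in S) => //=; rewrite mulrC.
Qed.

(* Swapping the S-coordinates of two independent samples is a measure-preserving
   involution of the product space, which decouples phi from psi. *)
Lemma sum_pweight_mul_indep S phi psi :
  depends_on S phi -> depends_on (~: S) psi ->
  \sum_om pweight om * (phi om * psi om) =
  (\sum_om pweight om * phi om) * (\sum_om pweight om * psi om).
Proof.
move=> dphi dpsi.
pose swap (ab : {ffun I -> J} * {ffun I -> J}) := (splice S ab.1 ab.2, splice S ab.2 ab.1).
have swapK : involutive swap.
  by move=> [a b]; rewrite /swap /= !splice_spliceK.
pose G (cd : {ffun I -> J} * {ffun I -> J}) :=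
  pweight cd.1 * (phi cd.1 * psi cd.1) * pweight cd.2.
symmetry; rewrite big_distrl /=; under eq_bigr => a _ do rewrite big_distrr /=.
rewrite pair_bigA /=.
transitivity (\sum_ab G (swap ab)); last first.
  rewrite (reindex_inj (inv_inj swapK)) /=.
  under eq_bigr => ab _ do rewrite swapK /G.
  rewrite -(pair_bigA _ (fun c d => pweight c * (phi c * psi c) * pweight d)) /=.
  by under eq_bigr => c _ do rewrite -big_distrr /= sum_pweight mulr1.
apply: eq_bigr => [[a b]] _; rewrite /G /swap /=.
have -> : phi (splice S a b) = phi a by apply: dphi => x xS; rewrite ffunE xS.
have -> : psi (splice S a b) = psi b.
  by apply: dpsi => x; rewrite in_setC => /negbTE xS; rewrite ffunE xS.
by rewrite mulrACA (pweight_splice S) mulrAC.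
Qed.

Lemma sum_pweight_prod_indep (S : nat -> {set I}) (phi : nat -> {ffun I -> J} -> R) M :
  (forall k, (k < M)%N -> depends_on (S k) (phi k)) ->
  (forall k k', (k < k' < M)%N -> [disjoint S k & S k']) ->
  \sum_om pweight om * \prod_(k < M) phi k om = \prod_(k < M) \sum_om pweight om * phi k om.
Proof.
elim: M => [|M IH] hdep hdis.
  by under eq_bigr => om _ do rewrite big_ord0 mulr1; rewrite sum_pweight big_ord0.
rewrite big_ord_recr /= -IH; first last.
- by move=> k k' /andP[kk' k'M]; apply: hdis; rewrite kk' ltnW.
- by move=> k kM; apply: hdep; apply: ltnW.
under eq_bigr => om _ do rewrite big_ord_recr /= [_ * phi M om]mulrC.
rewrite (@sum_pweight_mul_indep (S M)); [by rewrite mulrC | exact: hdep |].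
move=> a b hab; apply: eq_bigr => k _; apply: (hdep k (leqW (ltn_ord k))) => x xk.
apply: hab; rewrite in_setC; apply: contraTN xk => xM.
have hkM : (k < M < M.+1)%N by rewrite ltn_ord /=.
by rewrite (disjointFl (hdis k M hkM) xM).
Qed.

End ProductMeasure.

Lemma prod_natr_bool (R : comPzSemiRingType) (I : finType) (P : pred I) :
  \prod_x (P x)%:R = ([forall x, P x])%:R :> R.
Proof.
have [/forallP h|] := boolP [forall x, P x]; first by rewrite big1 // => x _; rewrite h.
rewrite negb_forall => /existsP [x hx].
by rewrite (bigD1 x) //= (negbTE hx) mul0r.
Qed.

Lemma card_ord_spread_le (K d : nat) (S : {set 'I_K}) :
  (forall i j, i \in S -> j \in S -> (j <= i + d)%N) -> (#|S| <= d.+1)%N.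
Proof.
move=> H; have [->|[i0 hi0]] := set_0Vmem S; first by rewrite cards0.
case: (@arg_minnP _ i0 (mem S) (@nat_of_ord K) hi0) => m hm hmin.
pose h (j : 'I_K) : 'I_d.+1 := inord (j - m).
have hlt j : j \in S -> (j - m < d.+1)%N by move=> jS; rewrite ltnS leq_subLR H.
rewrite -(card_in_imset (f := h)); first by apply: leq_trans (max_card _) _; rewrite card_ord.
move=> a b aS bS /(congr1 val); rewrite /= !inordK ?hlt // => e.
by apply: val_inj => /=; rewrite -(subnK (hmin a aS)) -(subnK (hmin b bS)) e.
Qed.

Section Clocks.
Variables (R : realType) (V : finType) (delta L : R) (C : V -> R -> R) (s : V -> R).
Hypotheses (hdrift : drift_bounded delta C) (hdelta : delta <= 1 / 7) (hL : 0 < L).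

Lemma drift_ge0 (w : V) : 0 <= delta.
Proof. by have /andP[h1 h2] := hdrift w 0 (@ler01 R); lra. Qed.

Lemma clock_incr w t1 t2 : t1 <= t2 ->
  (1 - delta) * (t2 - t1) <= C w t2 - C w t1 <= (1 + delta) * (t2 - t1).
Proof.
move=> h; have h' : 0 <= t2 - t1 by rewrite subr_ge0.
by have := hdrift w t1 h'; rewrite subrKC.
Qed.

Lemma clock_mono w t1 t2 : t1 <= t2 -> C w t1 <= C w t2.
Proof.
move=> h; have /andP[h1 _] := clock_incr w h.
have : 0 <= (1 - delta) * (t2 - t1) by apply: mulr_ge0; rewrite ?subr_ge0 //; have := hdelta; lra.
lra.
Qed.

(* A frame of u lasts at most L/(1 - delta) <= 7L/6 in real time, while frames j1 and
   j2 >= j1 + 3 of w are more than 2L/(1 + delta) >= 7L/4 apart. *)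
Lemma overlap_frames_close w j1 j2 u g :
  overlap C s L w j1 u g -> overlap C s L w j2 u g -> (j2 <= j1 + 2)%N.
Proof.
move=> [t1 [[_ /andP[a1 b1]] [_ /andP[c1 d1]]]] [t2 [[_ /andP[a2 b2]] [_ /andP[c2 d2]]]].
rewrite leqNgt; apply/negP => hj.
have hjL : (j1%:R + 3) * L <= j2%:R * L.
  by rewrite ler_pM2r // -natrD ler_nat addnS.
have d0 := drift_ge0 w; have d7 := hdelta; have L0 := hL.
rewrite -!natr1 in b1 b2 d1 d2.
have [ht|ht] := lerP t1 t2.
- have /andP[_ dw] := clock_incr w ht; have /andP[du _] := clock_incr u ht.
  have : 0 <= (1/7 - delta) * (t2 - t1) by apply: mulr_ge0; lra.
  by nra.
- by have := clock_mono w (ltW ht); nra.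
Qed.

(* Discrete intermediate value theorem: the clock advances by less than L over
   each step of a fine enough grid, so it cannot jump over [a, a + L). *)
Lemma clock_hits_window w (a : R) t1 t2 : t1 <= t2 -> C w t1 < a -> a + L <= C w t2 ->
  exists t, t1 <= t <= t2 /\ a <= C w t < a + L.
Proof.
move=> h12 h1 h2; have d0 := drift_ge0 w; have L0 := hL.
have x0 : 0 <= (1 + delta) * (t2 - t1) / L by apply: divr_ge0; nra.
have xn := archi_boundP x0; set n := Num.bound _ in xn.
have n0 : (0 : R) < n%:R by apply: le_lt_trans xn.
set h := (t2 - t1) / n%:R.
have h0 : 0 <= h by apply: divr_ge0; lra.
have hstep : (1 + delta) * h < L.
  by move: xn; rewrite ltr_pdivrMr // => xn; rewrite /h mulrA ltr_pdivrMr //; nra.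
pose pt (i : nat) := t1 + i%:R * h.
have ptn : pt n = t2 by rewrite /pt /h mulrC divfK ?subrKC //; lra.
have pt_ge i : t1 <= pt i by rewrite /pt lerDl mulr_ge0.
pose P (i : nat) := a <= C w (pt i).
have Pn : P n by rewrite /P ptn; lra.
case: (ex_minnP (ex_intro P n Pn)) => [[|i] Pi imin].
  by move: Pi; rewrite /P /pt mul0r addr0; lra.
have nPi : ~~ P i by apply/negP => /imin; rewrite ltnn.
have e : pt i.+1 = pt i + h by rewrite /pt -natr1 mulrDl mul1r addrA.
have hle : pt i <= pt i + h by rewrite lerDl.
have /andP[_ dw] := clock_incr w hle.
exists (pt i.+1); split.
- by rewrite pt_ge -ptn /pt lerD2l ler_wpM2r // ler_nat (imin n Pn).
- apply/andP; split; first exact: Pi.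
  by move: nPi dw; rewrite /P -ltNge e; lra.
Qed.

Lemma overlap_between w j u g1 g2 g3 : (g1 < g2 < g3)%N ->
  overlap C s L w j u g1 -> overlap C s L w j u g3 -> overlap C s L w j u g2.
Proof.
move=> /andP[h12 h23]; have d7 := hdelta; have L0 := hL.
move=> [t1 [[sw1 /andP[a1 b1]] [su1 /andP[c1 d1]]]].
move=> [t3 [[sw3 /andP[a3 b3]] [su3 /andP[c3 d3]]]].
have e12 : g1.+1%:R * L <= g2%:R * L by rewrite ler_pM2r // ler_nat.
have e23 : g2.+1%:R * L <= g3%:R * L by rewrite ler_pM2r // ler_nat.
rewrite -!natr1 in e12 e23 b1 b3 d1 d3.
have ht : t1 <= t3 by case: (lerP t1 t3) => // ht; have := clock_mono u (ltW ht); nra.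
have [t [/andP[ht1 ht3] /andP[hc1 hc2]]] :=
  @clock_hits_window u (g2%:R * L + C u (s u)) t1 t3 ht ltac:(nra) ltac:(nra).
have := clock_mono w ht1; have := clock_mono w ht3 => q1 q2.
exists t; split; (split; first exact: le_trans ht1); rewrite -natr1; apply/andP; lra.
Qed.

End Clocks.

Lemma expR1_le4 (R : realType) : expR (1 : R) <= 4.
Proof.
have -> : expR (1 : R) = expR (1/2) * expR (1/2) by rewrite -expRD; congr expR; field.
have := expRxMexpNx_1 (1/2 : R); have := expR_ge1Dx (- (1/2) : R).
by have := expR_ge0 (1/2 : R); nra.
Qed.

(* With y := 1/(3D - 1) we have (1 - 1/(3D)) (1 + y) = 1 and (1 + y)^(3D - 1) <= e. *)
Lemma quarter_le_expn (R : realType) (D : nat) : (0 < D)%N ->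
  1/4 <= (1 - 1/(3 * D%:R)) ^+ (3 * (D - 1)) :> R.
Proof.
move=> hD; have D1 : (1 : R) <= D%:R by rewrite ler1n.
set b : R := 1 - 1/(3 * D%:R); set m := (3 * D - 1)%N.
have mR : m%:R = 3 * D%:R - 1 :> R by rewrite natrB ?natrM // muln_gt0.
set y : R := 1 / (3 * D%:R - 1).
have y0 : 0 <= y by apply: divr_ge0; lra.
have b0 : 0 <= b by rewrite /b subr_ge0 ler_pdivrMr; lra.
have b1 : b <= 1 by rewrite /b lerBlDr lerDl; apply: divr_ge0; lra.
have hby : b * (1 + y) = 1 by rewrite /b /y; field; lra.
have hZ : (1 + y) ^+ m <= 4.
  apply: le_trans (expR1_le4 R).
  have my1 : m%:R * y = 1 by rewrite mR /y; field; lra.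
  rewrite -[X in expR X]my1 expRM_natl.
  by apply: lerXn2r; rewrite ?nnegrE ?expR_ge0 ?addr_ge0 ?expR_ge1Dx.
have hbm : b ^+ m * (1 + y) ^+ m = 1 by rewrite -exprMn hby expr1n.
have : b ^+ m <= b ^+ (3 * (D - 1)).
  by apply: ler_wiXn2l => //; rewrite /m mulnBr muln1 leq_sub2l.
have := exprn_ge0 m b0; have := exprn_ge0 m (addr_ge0 ler01 y0).
by nra.
Qed.

Lemma expR_pow_le_inv (R : realType) (q y : R) (M : nat) :
  0 < q -> 0 < y -> ln y / q <= M%:R -> expR (- q) ^+ M <= y^-1.
Proof.
move=> q0 y0 hM; rewrite -expRM_natl -[y^-1]lnK ?posrE ?invr_gt0 // lnV ?posrE //.
by rewrite ler_expR mulrN lerN2 -ler_pdivrMr.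
Qed.

Section Coverage.
Variables (R : realType) (V Ch : finType) (adj : rel V) (A : V -> {set Ch})
  (Dest : nat) (delta L : R) (C : V -> R -> R) (s : V -> R) (v u : V)
  (M K : nat) (f g : nat -> nat).
Hypotheses (hirr : irreflexive adj) (hA : forall w, (0 < #|A w|)%N)
  (hD : (0 < Dest)%N) (hDelta : (Delta adj A <= Dest)%N)
  (hdrift : drift_bounded delta C) (hdelta : delta <= 1 / 7) (hL : 0 < L)
  (hlink : is_link adj A v u)
  (hadm : admissible C s L v u M f g) (hwin : window_ok C s L K u M f g).

Local Notation I := (V * 'I_K)%type.
Local Notation J := (Ch * bool)%type.
Local Notation Om := {ffun I -> J}.
Local Notation mS := ((maxn (2 * Smax A) (3 * Dest))%:R : R).
Local Notation rate := (rho R adj A / (8 * mS)).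

Definition pframe (x : I) : J -> R := pchoice R A Dest x.1.

Lemma card_A_gt0 w : (0 : R) < #|A w|%:R.
Proof. by rewrite ltr0n. Qed.

Lemma Dest_gt0 : (0 : R) < Dest%:R.
Proof. by rewrite ltr0n. Qed.

Lemma ptx_ge0 w : 0 <= ptx R A Dest w.
Proof.
rewrite /ptx le_min; apply/andP; split; first lra.
by rewrite divr_ge0 ?mulr_ge0.
Qed.

Lemma ptx_le_half w : ptx R A Dest w <= 1 / 2.
Proof. by rewrite /ptx ge_min lexx. Qed.

Lemma ptx_le_ratio w : ptx R A Dest w <= #|A w|%:R / (3 * Dest%:R).
Proof. by rewrite /ptx ge_min lexx orbT. Qed.

Lemma pframe_ge0 x j : 0 <= pframe x j.
Proof.
rewrite /pframe /pchoice; case: ifP => _ //; rewrite mulr_ge0 ?invr_ge0 //.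
by case: j.2; rewrite ?ptx_ge0 // subr_ge0 (le_trans (ptx_le_half _)) //; lra.
Qed.

Lemma sum_pframe x : \sum_j pframe x j = 1.
Proof.
rewrite -(pair_bigA _ (fun c b => pframe x (c, b))) /=.
under eq_bigr => c _ do rewrite big_bool /pframe /pchoice /=.
transitivity (\sum_(c in A x.1) (#|A x.1|%:R : R)^-1).
  rewrite [RHS]big_mkcond; apply: eq_bigr => c _; case: ifP => _; last by rewrite addr0.
  by rewrite -mulrDr addrC subrK mulr1.
by rewrite sumr_const -[_ *+ _]mulr_natr mulVf // gt_eqF ?card_A_gt0.
Qed.

Lemma Prob_pweight (E : Om -> Prop) :
  Prob R A Dest E = \sum_om pweight pframe om * (`[< E om >])%:R.
Proof.
rewrite /Prob big_mkcond; apply: eq_bigr => om _.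
by case: asboolP => _; rewrite ?mulr1 ?mulr0.
Qed.

Lemma card_A_le_mS w : 2 * #|A w|%:R <= mS.
Proof.
rewrite -natrM ler_nat (leq_trans _ (leq_maxl _ _)) // leq_mul2l /=.
by rewrite /Smax (bigD1 w) //= leq_maxl.
Qed.

Lemma Dest_le_mS : 3 * Dest%:R <= mS.
Proof. by rewrite -natrM ler_nat leq_maxr. Qed.

Lemma rho_le_span_ratio : rho R adj A <= span_ratio R A v u.
Proof. by rewrite /rho (bigD1 (v, u)) //= ge_min lexx. Qed.

Lemma rho_gt0 : 0 < rho R adj A.
Proof.
apply: (big_ind (fun x => 0 < x)) => // [x y hx hy|[w1 w2] /= /existsP[c]].
  by rewrite lt_min hx hy.
move=> /and3P[_ h2 h3]; rewrite divr_gt0 ?card_A_gt0 // ltr0n.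
by apply/card_gt0P; exists c; rewrite /Defs.span inE h2 h3.
Qed.

Lemma rate_gt0 : 0 < rate.
Proof. by rewrite divr_gt0 ?rho_gt0 //; have := Dest_le_mS; have := Dest_gt0; lra. Qed.

Lemma rate_le_sum_span :
  rate <= \sum_(c in Defs.span A v u)
            (#|A v|%:R^-1 * ptx R A Dest v) * (#|A u|%:R^-1 * (1 - ptx R A Dest u)) * (1/4).
Proof.
set X := #|A v|%:R^-1 * _; set Y := _ * (1 - _).
have m0 : 0 < mS by have := Dest_le_mS; have := Dest_gt0; lra.
have hX : 1 / mS <= X.
  have := card_A_le_mS v; have := card_A_gt0 v => av hm1.
  rewrite /X ler_pdivlMl // /ptx le_min; apply/andP; split.
    by rewrite mulrA mulr1 ler_pdivrMr //; lra.
  rewrite mulrA mulr1; apply: ler_wpM2l; first exact: ltW.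
  by rewrite lef_pV2 ?posrE ?Dest_le_mS // mulr_gt0 ?Dest_gt0.
have hY : 1 / 2 <= 1 - ptx R A Dest u by have := ptx_le_half u; lra.
have := rho_le_span_ratio; rewrite /span_ratio => hr.
have r0 := rho_gt0.
rewrite sumr_const -(mulr_natr (X * Y * (1 / 4))).
have -> : X * Y * (1/4) * #|Defs.span A v u|%:R =
    (#|Defs.span A v u|%:R / #|A u|%:R) * X * (1 - ptx R A Dest u) * (1/4).
  by rewrite /Y; ring.
have -> : rate = rho R adj A * (1 / mS) * (1 / 2) * (1 / 4) by field; lra.
have m1 : 0 <= 1 / mS by rewrite divr_ge0 ?ltW.
apply: ler_wpM2r; first lra.
apply: ler_pM => //; [exact: mulr_ge0 (ltW r0) m1 | lra |].
by apply: ler_pM => //; apply: ltW.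
Qed.

Lemma link_neq : v != u.
Proof. by apply: contraTneq hlink => ->; apply/existsPn => c; rewrite /nbr_on hirr. Qed.

Lemma link_adj : adj u v.
Proof. by case/existsP: hlink => c /and3P[]. Qed.

Lemma admissible_lt k k' : (k < k' < M)%N -> (f k < f k')%N /\ (g k < g k')%N.
Proof.
case: hadm => hinc _ _; elim: k' => // k' IH /andP[].
rewrite ltnS leq_eqVlt => /orP[/eqP <- | hk] hM; first exact: hinc.
have [fk gk] := IH (introT andP (conj hk (ltnW hM))).
by have [fk' gk'] := hinc k' hM; rewrite (ltn_trans fk) // (ltn_trans gk).
Qed.

Lemma admissible_no_common_overlap k k' w j : (k < k' < M)%N ->
  overlap C s L w j u (g k) -> ~ overlap C s L w j u (g k').
Proof.
move=> /andP[hk hM] o1 o2; case: hadm => hinc _ hdis.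
have hk1 : (k.+1 < M)%N by apply: leq_ltn_trans hM.
apply: (hdis k hk1 w j); split => //.
move: hk; rewrite leq_eqVlt => /orP[/eqP -> // | hlt].
have [_ g1] := hinc k hk1; have [_ g2] := admissible_lt (introT andP (conj hlt hM)).
by apply: (overlap_between hdrift hdelta hL _ o1 o2); rewrite g1 g2.
Qed.

Definition pair_support (k : nat) : {set I} :=
  [set x : I | ((x.1 == v) && (val x.2 == f k)) || ((x.1 == u) && (val x.2 == g k))
     || [&& x.1 != v, adj u x.1 & `[< overlap C s L x.1 x.2 u (g k) >]]].

Definition uncovered (k : nat) (om : Om) : R :=
  (~~ `[< covers adj A C s L om v (f k) u (g k) >])%:R.

Lemma choice_at_eq (a b : Om) w j :
  (forall i : 'I_K, val i = j -> a (w, i) = b (w, i)) ->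
  choice_at a w j = choice_at b w j.
Proof. by rewrite /choice_at; case: insubP => [i _ hi|] // H; rewrite H. Qed.

Lemma covers_support k (a b : Om) : (forall x, x \in pair_support k -> a x = b x) ->
  covers adj A C s L a v (f k) u (g k) -> covers adj A C s L b v (f k) u (g k).
Proof.
move=> hab [c [hc [ht hl hw]]]; exists c; split => //; split.
- rewrite /transmits -ht; symmetry; apply: choice_at_eq => i hi; apply: hab.
  by rewrite inE /= eqxx hi eqxx.
- rewrite /listens -hl; symmetry; apply: choice_at_eq => i hi; apply: hab.
  by rewrite inE /= eqxx hi eqxx orbT.
- move=> w j hwv hn ho; rewrite /transmits.
  have -> : choice_at b w j = choice_at a w j.
    symmetry; apply: choice_at_eq => i hi; apply: hab.
    rewrite inE /= hwv /=; move: hn => /and3P[-> _ _] /=.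
    by apply/orP; right; apply/asboolP; rewrite hi.
  exact: hw.
Qed.

Lemma uncovered_depends k : depends_on (pair_support k) (uncovered k).
Proof.
move=> a b hab; rewrite /uncovered.
case: asboolP => ha; case: asboolP => hb //; exfalso.
- by apply: hb; apply: covers_support ha.
- by apply: ha; apply: (covers_support (a := b)) hb => x /hab.
Qed.

Lemma pair_supports_disjoint k k' : (k < k' < M)%N ->
  [disjoint pair_support k & pair_support k'].
Proof.
move=> hkk; have [fm gm] := admissible_lt hkk; have vu := link_neq.
apply/pred0P => -[w i] /=; apply/negP => /andP[]; rewrite !inE /=.
case/orP => [/orP[/andP[/eqP e1 /eqP e2]|/andP[/eqP e1 /eqP e2]]|/and3P[h1 h2 /asboolP h3]];
case/orP => [/orP[/andP[/eqP e1' /eqP e2']|/andP[/eqP e1' /eqP e2']]|/and3P[h1' h2' /asboolP h3']].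
- by move: fm; rewrite -e2 -e2' ltnn.
- by rewrite -e1 e1' eqxx in vu.
- by rewrite e1 eqxx in h1'.
- by rewrite -e1' e1 eqxx in vu.
- by move: gm; rewrite -e2 -e2' ltnn.
- by rewrite e1 hirr in h2'.
- by rewrite e1' eqxx in h1.
- by rewrite e1' hirr in h2.
- exact: (admissible_no_common_overlap hkk h3 h3').
Qed.

Lemma deg_card w c : deg adj A w c = #|[set w' | nbr_on adj A w w' c]|.
Proof.
rewrite /deg; apply: eq_card => w'; rewrite inE.
by rewrite /in_mem /= /classical_sets.in_set asboolb.
Qed.

Lemma card_other_nbrs c : c \in Defs.span A v u ->
  (#|[set w | (w != v) && nbr_on adj A u w c]| <= Dest - 1)%N.
Proof.
rewrite /Defs.span inE => /andP[hcu hcv].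
have hv : nbr_on adj A u v c by rewrite /nbr_on link_adj hcu hcv.
have : (deg adj A u c <= Dest)%N.
  apply: leq_trans hDelta; rewrite /Delta (bigD1 u) //= (bigD1 c) //=.
  by rewrite leq_max leq_maxl.
rewrite deg_card (cardsD1 v) inE hv leq_subRL //; apply: leq_trans.
by rewrite add1n ltnS subset_leq_card //; apply/subsetP => w; rewrite !inE.
Qed.

Section Pair.
Variables (k : nat) (hkM : (k < M)%N).
Let hF : (f k < K)%N. Proof. by case: (hwin hkM). Qed.
Let hG : (g k < K)%N. Proof. by case: (hwin hkM). Qed.
Local Notation xv := (v, Ordinal hF).
Local Notation xu := (u, Ordinal hG).

Definition interferers (c : Ch) : {set I} :=
  [set x : I | [&& x.1 != v, nbr_on adj A u x.1 c & `[< overlap C s L x.1 x.2 u (g k) >]]].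

(* A product set of outcomes contained in the event that pair k covers v -> u on c. *)
Definition good_choice (c : Ch) (x : I) : {set J} :=
  if x == xv then [set (c, true)] else if x == xu then [set (c, false)]
  else if x \in interferers c then ~: [set (c, true)] else setT.

Lemma xu_neq_xv : xu != xv.
Proof. by apply/eqP => -[e _]; move: link_neq; rewrite e eqxx. Qed.

Lemma choice_at_val (om : Om) w (i : 'I_K) : choice_at om w i = Some (om (w, i)).
Proof. by rewrite /choice_at valK. Qed.

Lemma good_choice_covers c (om : Om) : (forall x, om x \in good_choice c x) ->
  covers_on adj A C s L om v (f k) u (g k) c.
Proof.
move=> H; split.
- have := H xv; rewrite /good_choice eqxx inE => /eqP e.
  by rewrite /transmits (choice_at_val om v (Ordinal hF)) e.
- have := H xu; rewrite /good_choice (negbTE xu_neq_xv) eqxx inE => /eqP e.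
  by rewrite /listens (choice_at_val om u (Ordinal hG)) e.
- move=> w j hwv hn ho; rewrite /transmits /choice_at; case: insubP => [i _ hi|] //.
  case=> e.
  have hI : (w, i) \in interferers c.
    by rewrite inE /= hwv hn /=; apply/asboolP; rewrite hi.
  have h0 : (w, i) != xv by apply/eqP => -[e' _]; rewrite e' eqxx in hwv.
  have h1 : (w, i) != xu by apply/eqP => -[e' _]; move: hn; rewrite e' /nbr_on hirr.
  by have := H (w, i); rewrite /good_choice (negbTE h0) (negbTE h1) hI e !inE eqxx.
Qed.

(* The constraint at xv pins c down to the channel chosen by v, so at most one term
   of the sum is nonzero. *)
Lemma sum_good_le_covers (om : Om) :
  \sum_(c in Defs.span A v u) \prod_x (om x \in good_choice c x)%:R <=
  (`[< covers adj A C s L om v (f k) u (g k) >])%:R :> R.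
Proof.
under eq_bigr => c _ do rewrite (@prod_natr_bool _ _ (fun x => om x \in good_choice c x)).
case: asboolP => hc; last first.
  rewrite big1 // => c hc'; case: forallP => // h; exfalso; apply: hc.
  by exists c; split => //; apply: good_choice_covers.
apply: le_trans (_ : \sum_c ((om xv).1 == c)%:R <= 1).
  rewrite [X in X <= _]big_mkcond /=; apply: ler_sum => c _.
  case: (c \in _) => //; case: forallP => h //.
  by have := h xv; rewrite /good_choice eqxx inE => /eqP -> /=; rewrite eqxx.
rewrite (bigD1 (om xv).1) //= eqxx big1 ?addr0 // => c.
by rewrite eq_sym => /negbTE ->.
Qed.

Lemma card_interferers c : c \in Defs.span A v u -> (#|interferers c| <= 3 * (Dest - 1))%N.
Proof.
move=> hc; rewrite -sum1_card.
rewrite (eq_bigl (fun x : I => ((x.1 != v) && nbr_on adj A u x.1 c) &&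
   `[< overlap C s L x.1 x.2 u (g k) >])); last by move=> x; rewrite inE andbA.
rewrite -(pair_big_dep (fun w => (w != v) && nbr_on adj A u w c)
   (fun w (j : 'I_K) => `[< overlap C s L w j u (g k) >]) (fun _ _ => 1%N)) /=.
apply: (@leq_trans (\sum_(w | (w != v) && nbr_on adj A u w c) 3)).
  apply: leq_sum => w _; rewrite sum1dep_card; apply: card_ord_spread_le => i j.
  by rewrite !inE => /asboolP hi /asboolP hj; exact: (overlap_frames_close hdrift hdelta hL hi hj).
rewrite sum_nat_cond_const mulnC leq_mul2l /=.
by have := card_other_nbrs hc; rewrite cardsE.
Qed.

Lemma pframe_transmit_le x c : pframe x (c, true) <= 1 / (3 * Dest%:R).
Proof.
have hD3 : 0 <= 1 / (3 * Dest%:R) :> R by rewrite divr_ge0 ?mulr_ge0.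
rewrite /pframe /pchoice /=; case: ifP => // _.
have hinv : 0 <= (#|A x.1|%:R : R)^-1 by rewrite invr_ge0.
apply: le_trans (ler_wpM2l hinv (ptx_le_ratio x.1)) _.
by rewrite mulrA mulVf ?mul1r // gt_eqF ?card_A_gt0.
Qed.

Lemma prod_good_others_ge c : c \in Defs.span A v u ->
  1 / 4 <= \prod_(x | (x != xv) && (x != xu)) \sum_(j in good_choice c x) pframe x j.
Proof.
move=> hc; set b : R := 1 - 1 / (3 * Dest%:R).
have D1 : 1 <= Dest%:R :> R by rewrite ler1n.
have b0 : 0 <= b by rewrite /b subr_ge0 ler_pdivrMr ?mulr_gt0 ?Dest_gt0 //; lra.
have b1 : b <= 1 by rewrite /b gerBl divr_ge0 ?mulr_ge0.
apply: le_trans (quarter_le_expn R hD) _.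
apply: le_trans (_ : b ^+ #|interferers c| <= _); first exact: ler_wiXn2l (card_interferers hc).
rewrite -prodr_const.
have -> : \prod_(x in interferers c) b =
    \prod_(x | (x != xv) && (x != xu)) (if x \in interferers c then b else 1).
  rewrite big_mkcond [RHS]big_mkcond /=; apply: eq_bigr => x _.
  case hI: (x \in interferers c); last by case: ifP.
  move: hI; rewrite inE => /and3P[h1 h2 _].
  have -> : x != xv by apply: contraNneq h1 => ->.
  by have -> : x != xu by apply: contraTneq h2 => ->; rewrite /nbr_on hirr.
apply: ler_prod => x /andP[hxv hxu]; rewrite /good_choice (negbTE hxv) (negbTE hxu).
case: (x \in interferers c); rewrite ?b0 ?ler01 //=.
- by rewrite (sum_setC1 (@sum_pframe)); have := pframe_transmit_le x c; rewrite /b; lra.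
- by rewrite (eq_bigl predT) ?sum_pframe // => j; rewrite inE.
Qed.

Lemma prod_good_ge c : c \in Defs.span A v u ->
  (#|A v|%:R^-1 * ptx R A Dest v) * (#|A u|%:R^-1 * (1 - ptx R A Dest u)) * (1/4)
  <= \prod_x \sum_(j in good_choice c x) pframe x j.
Proof.
move=> hc; have /andP[hcu hcv] : (c \in A u) && (c \in A v) by rewrite -in_setI.
rewrite (bigD1 xv) //= (bigD1 xu) ?xu_neq_xv //= [X in _ <= X]mulrA.
rewrite {1 2}/good_choice eqxx (negbTE xu_neq_xv) eqxx !big_set1 /pframe /pchoice /= hcu hcv.
apply: ler_wpM2l; last exact: prod_good_others_ge.
by rewrite !mulr_ge0 ?invr_ge0 ?ptx_ge0 // subr_ge0 (le_trans (ptx_le_half u)) //; lra.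
Qed.

Lemma covers_prob_ge :
  rate <= \sum_om pweight pframe om * (`[< covers adj A C s L om v (f k) u (g k) >])%:R.
Proof.
apply: le_trans rate_le_sum_span _.
apply: le_trans (_ : \sum_(c in Defs.span A v u)
  \prod_x \sum_(j in good_choice c x) pframe x j <= _).
  by apply: ler_sum => c hc; apply: prod_good_ge.
under eq_bigr => c _ do rewrite -(sum_pweight_prod_mem pframe (good_choice c)).
rewrite exchange_big /=; apply: ler_sum => om _; rewrite -big_distrr /=.
by rewrite ler_wpM2l ?sum_good_le_covers ?pweight_ge0 //; apply: pframe_ge0.
Qed.

Lemma uncovered_prob_le : \sum_om pweight pframe om * uncovered k om <= expR (- rate).
Proof.
have hsum : \sum_om pweight pframe om * uncovered k om +
    \sum_om pweight pframe om * (`[< covers adj A C s L om v (f k) u (g k) >])%:R = 1.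
  rewrite -big_split /= -[RHS](sum_pweight (@sum_pframe)); apply: eq_bigr => om _.
  by rewrite /uncovered; case: (`[< _ >]); rewrite /= ?mulr0 ?mulr1 ?addr0 ?add0r.
by have := covers_prob_ge; have := expR_ge1Dx (- rate); lra.
Qed.

End Pair.

Lemma prod_natr_uncovered (om : Om) :
  (`[< ~ seq_covers adj A C s L om v u M f g >])%:R = \prod_(k < M) uncovered k om.
Proof.
rewrite asbool_neg; case: asboolP => [[k [hk hc]]|h] /=.
  by rewrite (bigD1 (Ordinal hk)) //= /uncovered /= (asboolT hc) /= mul0r.
rewrite big1 // => k _; rewrite /uncovered; case: asboolP => // hc.
by exfalso; apply: h; exists k.
Qed.

Lemma prob_not_seq_covers_le :
  @Prob R V Ch A K Dest (fun om => ~ seq_covers adj A C s L om v u M f g)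
    <= expR (- rate) ^+ M.
Proof.
rewrite Prob_pweight; under eq_bigr => om _ do rewrite prod_natr_uncovered.
rewrite (sum_pweight_prod_indep (@sum_pframe) (S := pair_support)); first last.
- exact: pair_supports_disjoint.
- by move=> k _; apply: uncovered_depends.
rewrite -[M in _ ^+ M]card_ord -prodr_const; apply: ler_prod => k _.
rewrite uncovered_prob_le // sumr_ge0 // => om _.
by rewrite mulr_ge0 ?pweight_ge0 //; apply: pframe_ge0.
Qed.

End Coverage.

Unset Implicit Arguments.
Theorem mainTheorem3 (R : realType) (V Ch : finType) (adj : rel V)
    (A : V -> {set Ch}) (Dest : nat) (delta L : R)
    (C : V -> R -> R) (s : V -> R) (eps : R) (v u : V) (M K : nat)
    (f g : nat -> nat) :
  symmetric adj -> irreflexive adj ->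
  (forall w : V, (0 < #|A w|)%N) ->
  (0 < Dest)%N -> (Delta adj A <= Dest)%N ->
  drift_bounded delta C -> delta <= 1 / 7 -> 0 < L ->
  0 < eps < 1 ->
  is_link adj A v u ->
  8 * (maxn (2 * Smax A) (3 * Dest))%:R / rho R adj A
      * ln (#|V|%:R ^+ 2 / eps) <= M%:R ->
  admissible C s L v u M f g ->
  window_ok C s L K u M f g ->
  @Prob R V Ch A K Dest (fun om => ~ seq_covers adj A C s L om v u M f g)
    <= eps / #|V|%:R ^+ 2.
Proof.
move=> _ hirr hA hD hDelta hdrift hdelta hL /andP[eps0 _] hlink hM hadm hwin.
have N0 : (0 : R) < #|V|%:R by rewrite ltr0n; apply/card_gt0P; exists v.
apply: le_trans (prob_not_seq_covers_le hirr hA hD hDelta hdrift hdelta hL hlink hadm hwin) _.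
rewrite -[X in _ <= X]invf_div; apply: expR_pow_le_inv.
- exact: (rate_gt0 R adj hA hD).
- by rewrite divr_gt0 ?exprn_gt0.
- by rewrite invf_div mulrC.
Qed.
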